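(* Problem (S) has at most one weak solution belonging to $C^1[0,1]$.
   Context: Fix $\epsilon>0$, $\Omega_A>0$, $\Omega_D>0$, $\alpha,\beta\in\mathbb{R}$. Problem (S): $\tfrac{\epsilon}{2}\rho''+(2\rho-1)\rho'+\Omega_A(1-\rho)-\Omega_D\rho=0$ on $(0,1)$, $\rho(0)=\alpha$, $\rho(1)=1-\beta$. A weak solution of (S) is a function $\rho\in W^{1,2}(0,1)$ with $\rho(0)=\alpha$, $\rho(1)=1-\beta$ and $\int_0^1\big[\tfrac{\epsilon}{2}\rho'\varphi'-\big((2\rho-1)\rho'+\Omega_A(1-\rho)-\Omega_D\rho\big)\varphi\big]dx=0$ for all $\varphi\in W^{1,2}_0(0,1)$. *)

From Stdlib Require Import Reals.
Open Scope R_scope.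

(* [f] is C^1 on the closed interval [0,1], with derivative [df]:
   at every x in [0,1], [df x] is the derivative of [f] at x taken within
   [0,1] (one-sided at the endpoints), and [df] is continuous on [0,1]
   (relative to [0,1]). *)
Definition C1_01 (f df : R -> R) : Prop :=
  (forall x, 0 <= x <= 1 ->
     limit1_in (fun y => (f y - f x) / (y - x))
               (fun y => 0 <= y <= 1 /\ y <> x) (df x) x) /\
  (forall x, 0 <= x <= 1 ->
     limit1_in df (fun y => 0 <= y <= 1) (df x) x).

(* Weak formulation of problem (S) for a C^1 function [rho] with derivative
   [drho] (for a C^1 function the weak derivative is the classical one).
   Test functions: C^1[0,1] functions vanishing at 0 and 1 (a subclass of
   W^{1,2}_0(0,1)). *)
Definition weak_solution_S (eps OmA OmD alpha beta : R) (rho drho : R -> R)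
  : Prop :=
  rho 0 = alpha /\ rho 1 = 1 - beta /\
  forall phi dphi : R -> R, C1_01 phi dphi -> phi 0 = 0 -> phi 1 = 0 ->
    exists pr : Riemann_integrable
      (fun x => eps / 2 * drho x * dphi x
                - ((2 * rho x - 1) * drho x + OmA * (1 - rho x) - OmD * rho x)
                  * phi x) 0 1,
      RiemannInt pr = 0.

From Stdlib Require Import Reals Lra Psatz.
From Coquelicot Require Import Coquelicot.
Open Scope R_scope.

(* Let w = rho1 - rho2 and g = rho1 + rho2 - 1.  Since
   (2 rho1 - 1) rho1' - (2 rho2 - 1) rho2' = (w g)', subtracting the two weak
   formulations and integrating the convection term by parts gives
     int_0^1 (eps/2) w' phi' + w g phi' + (OmA + OmD) w phi = 0
   for every C^1 test function phi vanishing at 0 and 1.  If w were positive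
   somewhere, test with phi = h(w), where h is a C^1 cutoff vanishing below
   theta, equal to 1 above 2 theta, nondecreasing, with s^2 h'(s) <= 6 theta.
   By Young's inequality the first two terms are bounded below by
   -3 theta max(g^2) / eps, while the reaction term is bounded below by a
   positive constant independent of theta; small theta gives a contradiction.
   The one-sided C^1 data on [0,1] are first continued affinely to R so that
   global derivatives and the fundamental theorem of calculus apply. *)

Ltac solve_continuity := repeat first
  [ apply continuity_pt_plus | apply continuity_pt_minus | apply continuity_pt_mult
  | apply continuity_pt_opp
  | apply continuity_pt_const; intros ? ?; reflexivity
  | match goal with H : forall x, continuity_pt _ x |- _ => apply H end ].

Lemma limit1_in_elim (f : R -> R) (D : R -> Prop) l x :
  limit1_in f D l x -> forall e, 0 < e ->
  exists d, 0 < d /\ forall y, D y -> Rabs (y - x) < d -> Rabs (f y - l) < e.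
Proof.
  intros H e He; destruct (H e He) as [d [Hd Hfd]].
  exists d; split; [exact Hd|]; intros y Dy Hy; exact (Hfd y (conj Dy Hy)).
Qed.

Lemma derivable_pt_lim_of_remainder (f : R -> R) x l :
  (forall e, 0 < e -> exists d, 0 < d /\ forall y, Rabs (y - x) < d ->
     Rabs (f y - f x - l * (y - x)) <= e * Rabs (y - x)) ->
  derivable_pt_lim f x l.
Proof.
  intros H e He.
  destruct (H (e / 2)) as [d [Hd Hrem]]; [lra|].
  exists (mkposreal d Hd); intros h Hh0 Hhd; simpl in Hhd.
  specialize (Hrem (x + h)); replace (x + h - x) with h in Hrem by ring.
  assert (Habs : 0 < Rabs h) by (apply Rabs_pos_lt; exact Hh0).
  replace ((f (x + h) - f x) / h - l) with ((f (x + h) - f x - l * h) / h)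
    by (field; exact Hh0).
  unfold Rdiv; rewrite Rabs_mult, Rabs_inv.
  apply (Rmult_lt_reg_r (Rabs h)); [exact Habs|].
  rewrite Rmult_assoc, Rinv_l, Rmult_1_r by lra.
  specialize (Hrem Hhd); nra.
Qed.

Lemma derivable_pt_lim_of_quadratic_remainder (f df : R -> R) L : 0 <= L ->
  (forall x y, Rabs (f y - f x - df x * (y - x)) <= L * (y - x) ^ 2) ->
  forall x, derivable_pt_lim f x (df x).
Proof.
  intros HL H x; apply derivable_pt_lim_of_remainder; intros e He.
  exists (e / (L + 1)); split; [apply Rdiv_lt_0_compat; lra|]; intros y Hy.
  apply (Rle_trans _ _ _ (H x y)).
  assert (Hd : Rabs (y - x) * (L + 1) <= e).
  { apply Rlt_le; apply (Rmult_lt_compat_r (L + 1)) in Hy; [|lra].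
    unfold Rdiv in Hy; rewrite Rmult_assoc, Rinv_l, Rmult_1_r in Hy; lra. }
  rewrite <- pow2_abs; pose proof (Rabs_pos (y - x)); nra.
Qed.

Lemma continuity_pt_of_lipschitz (f : R -> R) L : 0 <= L ->
  (forall x y, Rabs (f x - f y) <= L * Rabs (x - y)) ->
  forall x, continuity_pt f x.
Proof.
  intros HL H x e He.
  exists (e / (L + 1)); split; [apply Rdiv_lt_0_compat; lra|].
  intros y [_ Hy]; simpl in *; unfold R_dist in *.
  assert (Hd : Rabs (y - x) * (L + 1) < e).
  { apply (Rmult_lt_compat_r (L + 1)) in Hy; [|lra].
    unfold Rdiv in Hy; rewrite Rmult_assoc, Rinv_l, Rmult_1_r in Hy; lra. }
  pose proof (H y x); pose proof (Rabs_pos (y - x)); nra.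
Qed.

Definition clamp01 (x : R) : R := Rmax 0 (Rmin 1 x).

Ltac unfold_clamp01 := unfold clamp01, Rmax, Rmin; repeat destruct Rle_dec.

Lemma clamp01_in_01 x : 0 <= clamp01 x <= 1.
Proof. unfold_clamp01; lra. Qed.

Lemma clamp01_id x : 0 <= x <= 1 -> clamp01 x = x.
Proof. unfold_clamp01; lra. Qed.

Lemma clamp01_le0 x : x <= 0 -> clamp01 x = 0.
Proof. unfold_clamp01; lra. Qed.

Lemma clamp01_ge1 x : 1 <= x -> clamp01 x = 1.
Proof. unfold_clamp01; lra. Qed.

Lemma clamp01_lipschitz x y : Rabs (clamp01 x - clamp01 y) <= Rabs (x - y).
Proof. unfold_clamp01; split_Rabs; lra. Qed.

Lemma clamp01_between x y : 0 <= x <= 1 ->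
  Rabs (clamp01 y - x) + Rabs (y - clamp01 y) = Rabs (y - x).
Proof. unfold_clamp01; split_Rabs; lra. Qed.

Definition smoothstep (t : R) : R := 3 * t ^ 2 - 2 * t ^ 3.
Definition dsmoothstep (t : R) : R := 6 * t * (1 - t).

Lemma smoothstep_remainder s t : 0 <= s <= 1 -> 0 <= t <= 1 ->
  Rabs (smoothstep t - smoothstep s - dsmoothstep s * (t - s)) <= 3 * (t - s) ^ 2.
Proof.
  intros Hs Ht; unfold smoothstep, dsmoothstep.
  replace (3 * t ^ 2 - 2 * t ^ 3 - (3 * s ^ 2 - 2 * s ^ 3) - 6 * s * (1 - s) * (t - s))
    with ((t - s) ^ 2 * (3 - 2 * t - 4 * s)) by ring.
  pose proof (pow2_ge_0 (t - s)).
  rewrite Rabs_mult, (Rabs_pos_eq ((t - s) ^ 2)) by assumption.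
  assert (Rabs (3 - 2 * t - 4 * s) <= 3) by (apply Rabs_le; lra).
  nra.
Qed.

Lemma dsmoothstep_clamp01_offset a : dsmoothstep (clamp01 a) * (a - clamp01 a) = 0.
Proof. unfold dsmoothstep; unfold_clamp01; ring_simplify; lra. Qed.

Lemma dsmoothstep_clamp01_tail a b :
  Rabs (dsmoothstep (clamp01 a) * (b - clamp01 b)) <= 6 * (b - a) ^ 2.
Proof.
  replace ((b - a) ^ 2) with ((b - a) * (b - a)) by ring.
  pose proof (Rle_0_sqr (b - a)); unfold Rsqr in *.
  destruct (Rle_lt_dec a 0) as [Ha | Ha];
    [rewrite clamp01_le0 by exact Ha; unfold dsmoothstep;
     rewrite Rmult_0_r, !Rmult_0_l, Rabs_R0; nra|].
  destruct (Rle_lt_dec 1 a) as [Ha' | Ha'];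
    [rewrite clamp01_ge1 by exact Ha'; unfold dsmoothstep;
     rewrite Rminus_diag, Rmult_0_r, !Rmult_0_l, Rabs_R0; nra|].
  rewrite clamp01_id by lra; unfold dsmoothstep.
  assert (Hm : 0 <= a * (1 - a) <= Rmin a (1 - a))
    by (split; [nra | apply Rmin_glb; nra]).
  pose proof (Rmin_l a (1 - a)); pose proof (Rmin_r a (1 - a)).
  replace (6 * a * (1 - a)) with (6 * (a * (1 - a))) by ring.
  (* keeping a (1 - a) as an atom leaves nra a degree-two problem *)
  set (m := a * (1 - a)) in *.
  unfold_clamp01; apply Rabs_le; split; nra.
Qed.

Lemma smoothstep_clamp01_remainder a b :
  Rabs (smoothstep (clamp01 b) - smoothstep (clamp01 a)
        - dsmoothstep (clamp01 a) * (b - a)) <= 9 * (b - a) ^ 2.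
Proof.
  pose proof (dsmoothstep_clamp01_offset a) as Hoff.
  pose proof (dsmoothstep_clamp01_tail a b) as Htail.
  pose proof (clamp01_lipschitz b a) as Hlip.
  pose proof (smoothstep_remainder _ _ (clamp01_in_01 a) (clamp01_in_01 b)) as Hrem.
  set (s := clamp01 a) in *; set (t := clamp01 b) in *.
  (* b - a = (t - s) + (b - t) - (a - s), and dsmoothstep s kills a - s. *)
  replace (smoothstep t - smoothstep s - dsmoothstep s * (b - a))
    with ((smoothstep t - smoothstep s - dsmoothstep s * (t - s))
          - dsmoothstep s * (b - t) + dsmoothstep s * (a - s)) by ring.
  rewrite Hoff, Rplus_0_r.
  assert (Hsq : (t - s) ^ 2 <= (b - a) ^ 2)
    by (rewrite <- (pow2_abs (t - s)), <- (pow2_abs (b - a));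
        apply pow_incr; split; [apply Rabs_pos | exact Hlip]).
  unfold Rminus at 1; eapply Rle_trans; [apply Rabs_triang|].
  rewrite Rabs_Ropp; lra.
Qed.

Lemma dsmoothstep_clamp01_lipschitz u v :
  Rabs (dsmoothstep (clamp01 u) - dsmoothstep (clamp01 v)) <= 6 * Rabs (u - v).
Proof.
  pose proof (clamp01_in_01 u); pose proof (clamp01_in_01 v).
  pose proof (clamp01_lipschitz u v).
  unfold dsmoothstep.
  replace (6 * clamp01 u * (1 - clamp01 u) - 6 * clamp01 v * (1 - clamp01 v))
    with (6 * (clamp01 u - clamp01 v) * (1 - clamp01 u - clamp01 v)) by ring.
  rewrite !Rabs_mult, (Rabs_pos_eq 6) by lra.
  assert (Rabs (1 - clamp01 u - clamp01 v) <= 1) by (apply Rabs_le; lra).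
  pose proof (Rabs_pos (clamp01 u - clamp01 v)).
  pose proof (Rabs_pos (1 - clamp01 u - clamp01 v)); nra.
Qed.

Section Cutoff.

Variable th : R.
Hypothesis th_pos : 0 < th.

Definition cutoff (s : R) : R := smoothstep (clamp01 ((s - th) / th)).
Definition dcutoff (s : R) : R := dsmoothstep (clamp01 ((s - th) / th)) / th.

Let cutoff_arg_mul s : (s - th) / th * th = s - th.
Proof. field; lra. Qed.

Lemma cutoff_derivable s : derivable_pt_lim cutoff s (dcutoff s).
Proof.
  apply (derivable_pt_lim_of_quadratic_remainder _ _ (9 / th ^ 2)).
  { apply Rlt_le, Rdiv_lt_0_compat; [lra | apply pow_lt; exact th_pos]. }
  intros x y; unfold cutoff, dcutoff.
  replace (dsmoothstep (clamp01 ((x - th) / th)) / th * (y - x))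
    with (dsmoothstep (clamp01 ((x - th) / th)) * ((y - th) / th - (x - th) / th))
    by (field; lra).
  eapply Rle_trans; [apply smoothstep_clamp01_remainder|].
  right; field; lra.
Qed.

Lemma dcutoff_continuous s : continuity_pt dcutoff s.
Proof.
  apply (continuity_pt_of_lipschitz _ (6 / th ^ 2)).
  { apply Rlt_le, Rdiv_lt_0_compat; [lra | apply pow_lt; exact th_pos]. }
  intros x y; unfold dcutoff.
  replace (dsmoothstep (clamp01 ((x - th) / th)) / th
           - dsmoothstep (clamp01 ((y - th) / th)) / th)
    with ((dsmoothstep (clamp01 ((x - th) / th))
           - dsmoothstep (clamp01 ((y - th) / th))) / th) by (field; lra).
  unfold Rdiv at 1; rewrite Rabs_mult, (Rabs_pos_eq (/ th))
    by (apply Rlt_le, Rinv_0_lt_compat; exact th_pos).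
  apply (Rle_trans _ (6 * Rabs ((x - th) / th - (y - th) / th) * / th)).
  { apply Rmult_le_compat_r; [apply Rlt_le, Rinv_0_lt_compat; exact th_pos|].
    apply dsmoothstep_clamp01_lipschitz. }
  replace ((x - th) / th - (y - th) / th) with ((x - y) / th) by (field; lra).
  unfold Rdiv; rewrite Rabs_mult, (Rabs_pos_eq (/ th))
    by (apply Rlt_le, Rinv_0_lt_compat; exact th_pos).
  right; field; lra.
Qed.

Lemma cutoff_eq0 s : s <= th -> cutoff s = 0.
Proof.
  intros Hs; pose proof (cutoff_arg_mul s).
  unfold cutoff; rewrite clamp01_le0 by nra; unfold smoothstep; ring.
Qed.

Lemma cutoff_eq1 s : 2 * th <= s -> cutoff s = 1.
Proof.
  intros Hs; pose proof (cutoff_arg_mul s).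
  unfold cutoff; rewrite clamp01_ge1 by nra; unfold smoothstep; ring.
Qed.

Lemma dcutoff_ge0 s : 0 <= dcutoff s.
Proof.
  pose proof (clamp01_in_01 ((s - th) / th)).
  unfold dcutoff, dsmoothstep; apply Rdiv_le_0_compat; nra.
Qed.

Lemma mul_cutoff_ge0 s : 0 <= s * cutoff s.
Proof.
  destruct (Rle_lt_dec s th) as [Hs | Hs].
  - rewrite cutoff_eq0 by exact Hs; lra.
  - pose proof (clamp01_in_01 ((s - th) / th)).
    assert (0 <= cutoff s) by (unfold cutoff, smoothstep; nra).
    nra.
Qed.

Lemma sqr_mul_dcutoff_le s : s ^ 2 * dcutoff s <= 6 * th.
Proof.
  pose proof (cutoff_arg_mul s).
  destruct (Rle_lt_dec s th) as [H1 | H1].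
  { unfold dcutoff; rewrite clamp01_le0 by nra; unfold dsmoothstep.
    replace (s ^ 2 * (6 * 0 * (1 - 0) / th)) with 0 by (field; lra); lra. }
  destruct (Rle_lt_dec (2 * th) s) as [H2 | H2].
  { unfold dcutoff; rewrite clamp01_ge1 by nra; unfold dsmoothstep.
    replace (s ^ 2 * (6 * 1 * (1 - 1) / th)) with 0 by (field; lra); lra. }
  set (X := (s - th) / th) in *.
  assert (HX : 0 <= X <= 1) by nra.
  unfold dcutoff; fold X; rewrite clamp01_id by exact HX; unfold dsmoothstep.
  replace (s ^ 2 * (6 * X * (1 - X) / th))
    with (6 * th * ((1 + X) * (1 + X) * (X * (1 - X)))) by (subst X; field; lra).
  assert ((1 + X) * (1 + X) <= 4) by nra.
  pose proof (Rle_0_sqr (X - 1 / 2)); unfold Rsqr in *.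
  assert (0 <= X * (1 - X) <= 1 / 4) by (split; nra).
  assert ((1 + X) * (1 + X) * (X * (1 - X)) <= 1) by nra.
  nra.
Qed.

End Cutoff.

Definition C1_extension (f df : R -> R) (x : R) : R :=
  f (clamp01 x) + df (clamp01 x) * (x - clamp01 x).

Lemma C1_extension_id f df x : 0 <= x <= 1 -> C1_extension f df x = f x.
Proof. intros Hx; unfold C1_extension; rewrite clamp01_id by exact Hx; ring. Qed.

Lemma C1_extension_locally_affine f df x y : clamp01 y = clamp01 x ->
  C1_extension f df y - C1_extension f df x - df (clamp01 x) * (y - x) = 0.
Proof. intros Hyx; unfold C1_extension; rewrite Hyx; ring. Qed.

Lemma C1_01_remainder f df x : C1_01 f df -> 0 <= x <= 1 ->
  forall e, 0 < e -> exists d, 0 < d /\ forall u, 0 <= u <= 1 -> Rabs (u - x) < d ->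
    Rabs (f u - f x - df x * (u - x)) <= e * Rabs (u - x).
Proof.
  intros [Hdiff _] Hx e He.
  destruct (limit1_in_elim _ _ _ _ (Hdiff x Hx) e He) as [d [Hd Hquot]].
  exists d; split; [exact Hd|]; intros u Hu Hux.
  destruct (Req_dec u x) as [-> | Hne].
  { replace (f x - f x - df x * (x - x)) with 0 by ring.
    rewrite Rminus_diag, Rabs_R0; lra. }
  specialize (Hquot u (conj Hu Hne) Hux).
  replace (f u - f x - df x * (u - x)) with (((f u - f x) / (u - x) - df x) * (u - x))
    by (field; lra).
  rewrite Rabs_mult; apply Rmult_le_compat_r; [apply Rabs_pos | lra].
Qed.

Lemma C1_extension_derivable f df : C1_01 f df ->
  forall x, derivable_pt_lim (C1_extension f df) x (df (clamp01 x)).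
Proof.
  intros Hf x; apply derivable_pt_lim_of_remainder; intros e He.
  destruct (Rlt_le_dec x 0) as [Hx0 | Hx0].
  { exists (- x); split; [lra|]; intros y Hy.
    rewrite (C1_extension_locally_affine f df x y), Rabs_R0;
      [| rewrite !clamp01_le0; [reflexivity | lra | apply Rabs_def2 in Hy; lra]].
    pose proof (Rabs_pos (y - x)); nra. }
  destruct (Rlt_le_dec 1 x) as [Hx1 | Hx1].
  { exists (x - 1); split; [lra|]; intros y Hy.
    rewrite (C1_extension_locally_affine f df x y), Rabs_R0;
      [| rewrite !clamp01_ge1; [reflexivity | lra | apply Rabs_def2 in Hy; lra]].
    pose proof (Rabs_pos (y - x)); nra. }
  assert (Hx : 0 <= x <= 1) by lra.
  destruct (C1_01_remainder f df x Hf Hx e He) as [d1 [Hd1 Hrem]].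
  destruct (limit1_in_elim _ _ _ _ (proj2 Hf x Hx) e He) as [d2 [Hd2 Hcont]].
  exists (Rmin d1 d2); split; [apply Rmin_pos; assumption|]; intros y Hy.
  pose proof (Rmin_l d1 d2); pose proof (Rmin_r d1 d2).
  pose proof (clamp01_between x y Hx) as Hsplit.
  pose proof (clamp01_lipschitz y x) as Hlip; rewrite (clamp01_id x Hx) in Hlip.
  pose proof (clamp01_in_01 y) as Hu.
  rewrite (C1_extension_id _ _ x Hx), (clamp01_id x Hx); unfold C1_extension.
  set (u := clamp01 y) in *.
  (* u lies between x and y: one-sided remainder on [x, u], slope change on [u, y] *)
  replace (f u + df u * (y - u) - f x - df x * (y - x))
    with ((f u - f x - df x * (u - x)) + (df u - df x) * (y - u)) by ring.
  eapply Rle_trans; [apply Rabs_triang|].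
  assert (Hfirst : Rabs (f u - f x - df x * (u - x)) <= e * Rabs (u - x))
    by (apply Hrem; [exact Hu | lra]).
  assert (Hsecond : Rabs ((df u - df x) * (y - u)) <= e * Rabs (y - u)).
  { rewrite Rabs_mult; apply Rmult_le_compat_r; [apply Rabs_pos|].
    apply Rlt_le, Hcont; [exact Hu | lra]. }
  rewrite <- Hsplit; lra.
Qed.

Lemma C1_extension_derivative_continuous f df : C1_01 f df ->
  forall x, continuity_pt (fun y => df (clamp01 y)) x.
Proof.
  intros [_ Hcont] x e He.
  destruct (limit1_in_elim _ _ _ _ (Hcont _ (clamp01_in_01 x)) e He) as [d [Hd Hnear]].
  exists d; split; [exact Hd|]; intros y [_ Hy]; simpl in *; unfold R_dist in *.
  apply Hnear; [apply clamp01_in_01|].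
  eapply Rle_lt_trans; [apply clamp01_lipschitz | exact Hy].
Qed.

Lemma C1_01_extend f df : C1_01 f df ->
  exists F dF, (forall x, derivable_pt_lim F x (dF x)) /\
    (forall x, continuity_pt dF x) /\
    (forall x, 0 <= x <= 1 -> F x = f x /\ dF x = df x).
Proof.
  intros Hf; exists (C1_extension f df), (fun y => df (clamp01 y)); split; [|split].
  - exact (C1_extension_derivable f df Hf).
  - exact (C1_extension_derivative_continuous f df Hf).
  - intros x Hx; rewrite C1_extension_id, clamp01_id by exact Hx; split; reflexivity.
Qed.

Lemma C1_01_of_derivable f df :
  (forall x, derivable_pt_lim f x (df x)) -> (forall x, continuity_pt df x) ->
  C1_01 f df.
Proof.
  intros Hd Hc; split; intros x _ e He.
  - destruct (Hd x e He) as [d Hquot]; exists d; split; [apply cond_pos|].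
    intros y [[_ Hyx] Hy]; simpl in *; unfold R_dist in *.
    specialize (Hquot (y - x)); replace (x + (y - x)) with y in Hquot by ring.
    apply Hquot; [lra | exact Hy].
  - destruct (Hc x e He) as [d [Hd0 Hnear]]; exists d; split; [exact Hd0|].
    intros y [_ Hy]; destruct (Req_dec y x) as [-> | Hyx].
    + simpl; unfold R_dist; rewrite Rminus_diag, Rabs_R0; exact He.
    + apply Hnear; split; [split; [exact I | congruence] | exact Hy].
Qed.

Lemma RInt_ge_const (f : R -> R) a b m : a <= b -> ex_RInt f a b ->
  (forall x, a < x < b -> m <= f x) -> (b - a) * m <= RInt f a b.
Proof.
  intros Hab Hex Hm.
  replace ((b - a) * m) with (RInt (fun _ => m) a b) by (rewrite RInt_const; reflexivity).
  apply RInt_le; [exact Hab | apply ex_RInt_const | exact Hex | exact Hm].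
Qed.

Lemma is_RInt_ge_step (f : R -> R) a p q b l m M :
  a <= p -> p <= q -> q <= b -> is_RInt f a b l ->
  (forall x, a < x < b -> m <= f x) -> (forall x, p < x < q -> M <= f x) ->
  (b - a) * m + (q - p) * (M - m) <= l.
Proof.
  intros Hap Hpq Hqb Hf Hm HM.
  assert (Hab : ex_RInt f a b) by (exists l; exact Hf).
  assert (Hap' : ex_RInt f a p) by (apply (ex_RInt_Chasles_1 f a p b); [lra | exact Hab]).
  assert (Hpb : ex_RInt f p b) by (apply (ex_RInt_Chasles_2 f a p b); [lra | exact Hab]).
  assert (Hpq' : ex_RInt f p q) by (apply (ex_RInt_Chasles_1 f p q b); [lra | exact Hpb]).
  assert (Hqb' : ex_RInt f q b) by (apply (ex_RInt_Chasles_2 f p q b); [lra | exact Hpb]).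
  rewrite <- (is_RInt_unique f a b l Hf), <- (RInt_Chasles f a p b Hap' Hpb),
    <- (RInt_Chasles f p q b Hpq' Hqb').
  pose proof (RInt_ge_const f a p m Hap Hap' (fun x Hx => Hm x ltac:(lra))).
  pose proof (RInt_ge_const f p q M Hpq Hpq' HM).
  pose proof (RInt_ge_const f q b m Hqb Hqb' (fun x Hx => Hm x ltac:(lra))).
  unfold plus; simpl; lra.
Qed.

Lemma young_lower_bound eps c a b : 0 < eps -> 0 <= c ->
  - (c * b ^ 2) / (2 * eps) <= eps / 2 * c * a ^ 2 + c * b * a.
Proof.
  intros Heps Hc.
  assert (Hsq : 0 <= c * (eps * a + b) ^ 2 / (2 * eps))
    by (apply Rdiv_le_0_compat; [apply Rmult_le_pos; [exact Hc | apply pow2_ge_0] | lra]).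
  replace (eps / 2 * c * a ^ 2 + c * b * a)
    with (- (c * b ^ 2) / (2 * eps) + c * (eps * a + b) ^ 2 / (2 * eps)) by (field; lra).
  lra.
Qed.

Definition weak_integrand (eps OmA OmD : R) (rho drho phi dphi : R -> R) (x : R) : R :=
  eps / 2 * drho x * dphi x
  - ((2 * rho x - 1) * drho x + OmA * (1 - rho x) - OmD * rho x) * phi x.

Lemma weak_solution_is_RInt eps OmA OmD alpha beta rho drho F dF phi dphi :
  weak_solution_S eps OmA OmD alpha beta rho drho ->
  (forall x, 0 <= x <= 1 -> F x = rho x /\ dF x = drho x) ->
  (forall x, derivable_pt_lim phi x (dphi x)) -> (forall x, continuity_pt dphi x) ->
  phi 0 = 0 -> phi 1 = 0 ->
  is_RInt (weak_integrand eps OmA OmD F dF phi dphi) 0 1 0.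
Proof.
  intros [_ [_ Hweak]] HF Hphi Hdphi H0 H1.
  destruct (Hweak phi dphi (C1_01_of_derivable phi dphi Hphi Hdphi) H0 H1) as [pr Hpr].
  pose proof (RInt_correct _ _ _ (ex_RInt_Reals_1 _ _ _ pr)) as Hint.
  rewrite (RInt_Reals _ _ _ pr), Hpr in Hint.
  refine (is_RInt_ext _ _ _ _ _ _ Hint).
  rewrite Rmin_left, Rmax_right by lra; intros x Hx.
  unfold weak_integrand; destruct (HF x ltac:(lra)) as [-> ->]; reflexivity.
Qed.

Lemma continuity_pt_gt_on_subinterval (f : R -> R) a b x0 c :
  a < b -> a <= x0 <= b -> continuity_pt f x0 -> c < f x0 ->
  exists p q, a <= p /\ p < q /\ q <= b /\ forall y, p < y < q -> c < f y.
Proof.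
  intros Hab Hx0 Hf Hc.
  destruct (Hf (f x0 - c)) as [d [Hd Hnear]]; [lra|].
  exists (Rmax a (x0 - d / 2)), (Rmin b (x0 + d / 2)).
  pose proof (Rmax_r a (x0 - d / 2)); pose proof (Rmin_r b (x0 + d / 2)).
  split; [apply Rmax_l|]; split; [unfold Rmax, Rmin; repeat destruct Rle_dec; lra|].
  split; [apply Rmin_l|]; intros y Hy.
  destruct (Req_dec y x0) as [-> | Hne]; [exact Hc|].
  assert (Hy' : Rabs (y - x0) < d) by (apply Rabs_def1; lra).
  specialize (Hnear y (conj (conj I (not_eq_sym Hne)) Hy')); simpl in Hnear.
  unfold R_dist in Hnear; apply Rabs_def2 in Hnear; lra.
Qed.

Lemma exists_small_pos a b c : 0 < a -> 0 < b -> 0 <= c ->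
  exists t, 0 < t /\ t <= a /\ c * t < b.
Proof.
  intros Ha Hb Hc.
  exists (Rmin a (b / (c + 1))).
  pose proof (Rmin_l a (b / (c + 1))); pose proof (Rmin_r a (b / (c + 1))) as Hr.
  assert (Ht : 0 < Rmin a (b / (c + 1)))
    by (apply Rmin_pos; [exact Ha | apply Rdiv_lt_0_compat; lra]).
  split; [exact Ht|]; split; [assumption|].
  apply (Rmult_le_compat_r (c + 1)) in Hr; [|lra].
  unfold Rdiv in Hr; rewrite Rmult_assoc, Rinv_l, Rmult_1_r in Hr; [|lra].
  nra.
Qed.

Section MaximumPrinciple.

Variables (eps K : R) (w dw g : R -> R).
Hypothesis eps_pos : 0 < eps.
Hypothesis K_pos : 0 < K.
Hypothesis w_derivable : forall x, derivable_pt_lim w x (dw x).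
Hypothesis dw_continuous : forall x, continuity_pt dw x.
Hypothesis g_continuous : forall x, continuity_pt g x.
Hypothesis w_0 : w 0 = 0.
Hypothesis w_1 : w 1 = 0.
Hypothesis w_weak_identity : forall phi dphi,
  (forall x, derivable_pt_lim phi x (dphi x)) -> (forall x, continuity_pt dphi x) ->
  phi 0 = 0 -> phi 1 = 0 ->
  is_RInt (fun x => eps / 2 * dw x * dphi x + w x * g x * dphi x + K * w x * phi x) 0 1 0.

Let w_continuous x : continuity_pt w x.
Proof. apply derivable_continuous_pt; exists (dw x); apply w_derivable. Qed.

Lemma cutoff_energy_lower_bound th G2 x : 0 < th -> g x * g x <= G2 ->
  - (3 * th * G2 / eps) + K * (w x * cutoff th (w x))
  <= eps / 2 * dw x * (dcutoff th (w x) * dw x)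
     + w x * g x * (dcutoff th (w x) * dw x) + K * w x * cutoff th (w x).
Proof.
  intros Hth Hg.
  set (c := dcutoff th (w x)).
  assert (Hc : 0 <= c) by apply (dcutoff_ge0 th Hth).
  assert (Hcb : c * (w x * g x) ^ 2 <= 6 * th * G2).
  { replace (c * (w x * g x) ^ 2) with ((w x ^ 2 * c) * (g x * g x)) by ring.
    apply Rmult_le_compat;
      [apply Rmult_le_pos; [apply pow2_ge_0 | exact Hc] | apply Rle_0_sqr
      | apply (sqr_mul_dcutoff_le th Hth) | exact Hg]. }
  assert (Hdiv : - (3 * th * G2 / eps) <= - (c * (w x * g x) ^ 2) / (2 * eps)).
  { replace (- (3 * th * G2 / eps)) with (- (6 * th * G2) / (2 * eps)) by (field; lra).
    unfold Rdiv; apply Rmult_le_compat_r; [apply Rlt_le, Rinv_0_lt_compat | ]; lra. }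
  pose proof (young_lower_bound eps c (dw x) (w x * g x) eps_pos Hc) as Hyoung.
  replace (eps / 2 * dw x * (c * dw x) + w x * g x * (c * dw x))
    with (eps / 2 * c * dw x ^ 2 + c * (w x * g x) * dw x) by ring.
  replace (K * w x * cutoff th (w x)) with (K * (w x * cutoff th (w x))) by ring.
  lra.
Qed.

Lemma cutoff_comp_weak_identity th : 0 < th ->
  is_RInt (fun x => eps / 2 * dw x * (dcutoff th (w x) * dw x)
                    + w x * g x * (dcutoff th (w x) * dw x)
                    + K * w x * cutoff th (w x)) 0 1 0.
Proof.
  intros Hth; apply (w_weak_identity (fun x => cutoff th (w x))).
  - intro x; exact (derivable_pt_lim_comp w (cutoff th) x _ _
                      (w_derivable x) (cutoff_derivable th Hth (w x))).
  - intro x; apply continuity_pt_mult; [|apply dw_continuous].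
    exact (continuity_pt_comp w (dcutoff th) x (w_continuous x)
             (dcutoff_continuous th Hth _)).
  - rewrite w_0; apply cutoff_eq0; lra.
  - rewrite w_1; apply cutoff_eq0; lra.
Qed.

Lemma weak_identity_nonpositive x0 : 0 <= x0 <= 1 -> w x0 <= 0.
Proof.
  intros Hx0; apply Rnot_lt_le; intros HW; remember (w x0) as W eqn:HW_def.
  destruct (continuity_pt_gt_on_subinterval w 0 1 x0 (W / 2))
    as [p [q [Hp [Hpq [Hq Hwpq]]]]]; [lra | exact Hx0 | apply w_continuous | lra |].
  destruct (continuity_ab_maj (fun x => g x * g x) 0 1) as [xM [HgM _]];
    [lra | intros; solve_continuity |].
  set (G2 := g xM * g xM) in HgM.
  set (B := (q - p) * (K * (W / 2))).
  assert (HB : 0 < B) by (apply Rmult_lt_0_compat; [lra | apply Rmult_lt_0_compat; lra]).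
  assert (HG2 : 0 <= 3 * G2 / eps).
  { apply Rdiv_le_0_compat; [|lra].
    unfold G2; pose proof (Rle_0_sqr (g xM)); unfold Rsqr in *; lra. }
  (* th <= W / 4 makes the cutoff equal to 1 where w > W / 2, and the Young
     error 3 th G2 / eps stays below the reaction gain B collected on (p, q) *)
  destruct (exists_small_pos (W / 4) B (3 * G2 / eps)) as [th [Hth [Hth_W Hth_B]]];
    [lra | exact HB | exact HG2 |].
  replace (3 * G2 / eps * th) with (3 * th * G2 / eps) in Hth_B by (field; lra).
  pose proof (cutoff_comp_weak_identity th Hth) as Hid.
  assert (Hlow : forall x, 0 <= x <= 1 ->
    - (3 * th * G2 / eps) + K * (w x * cutoff th (w x))
    <= eps / 2 * dw x * (dcutoff th (w x) * dw x)
       + w x * g x * (dcutoff th (w x) * dw x) + K * w x * cutoff th (w x))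
    by (intros x Hx; apply cutoff_energy_lower_bound; [exact Hth | apply HgM; exact Hx]).
  set (c := 3 * th * G2 / eps) in *.
  assert (Hgain : (1 - 0) * (- c) + (q - p) * (K * (W / 2) - c - - c) <= 0).
  { apply (is_RInt_ge_step _ 0 p q 1 0 (- c) (K * (W / 2) - c)
             Hp (Rlt_le _ _ Hpq) Hq Hid).
    - intros x Hx; pose proof (Hlow x ltac:(lra)).
      pose proof (mul_cutoff_ge0 th Hth (w x)); nra.
    - intros x Hx; pose proof (Hlow x ltac:(lra)); pose proof (Hwpq x Hx).
      rewrite (cutoff_eq1 th Hth (w x)) in * by lra; nra. }
  replace ((q - p) * (K * (W / 2) - c - - c)) with B in Hgain by (unfold B; ring).
  lra.
Qed.

End MaximumPrinciple.

Section TwoWeakSolutions.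

Variables (eps OmA OmD alpha beta : R).
Variables (rho1 drho1 rho2 drho2 F1 dF1 F2 dF2 : R -> R).
Hypothesis eps_pos : 0 < eps.
Hypothesis OmA_OmD_pos : 0 < OmA + OmD.
Hypothesis weak1 : weak_solution_S eps OmA OmD alpha beta rho1 drho1.
Hypothesis weak2 : weak_solution_S eps OmA OmD alpha beta rho2 drho2.
Hypothesis F1_derivable : forall x, derivable_pt_lim F1 x (dF1 x).
Hypothesis F2_derivable : forall x, derivable_pt_lim F2 x (dF2 x).
Hypothesis dF1_continuous : forall x, continuity_pt dF1 x.
Hypothesis dF2_continuous : forall x, continuity_pt dF2 x.
Hypothesis F1_extends : forall x, 0 <= x <= 1 -> F1 x = rho1 x /\ dF1 x = drho1 x.
Hypothesis F2_extends : forall x, 0 <= x <= 1 -> F2 x = rho2 x /\ dF2 x = drho2 x.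

Let F1_continuous x : continuity_pt F1 x.
Proof. apply derivable_continuous_pt; exists (dF1 x); apply F1_derivable. Qed.

Let F2_continuous x : continuity_pt F2 x.
Proof. apply derivable_continuous_pt; exists (dF2 x); apply F2_derivable. Qed.

Lemma weak_solutions_difference_identity phi dphi :
  (forall x, derivable_pt_lim phi x (dphi x)) -> (forall x, continuity_pt dphi x) ->
  phi 0 = 0 -> phi 1 = 0 ->
  is_RInt (fun x => eps / 2 * (dF1 x - dF2 x) * dphi x
                    + (F1 x - F2 x) * (F1 x + F2 x - 1) * dphi x
                    + (OmA + OmD) * (F1 x - F2 x) * phi x) 0 1 0.
Proof.
  intros Hphi Hdphi Hphi0 Hphi1.
  set (P := fun x => (F1 x - F2 x) * (F1 x + F2 x - 1)).
  (* dP in the literal shape produced by the product rule, hence the [- 0] *)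
  set (dP := fun x => (dF1 x - dF2 x) * (F1 x + F2 x - 1) + (F1 x - F2 x) * (dF1 x + dF2 x - 0)).
  assert (HP : forall x, derivable_pt_lim P x (dP x)).
  { intro x; exact (derivable_pt_lim_mult _ _ x _ _
      (derivable_pt_lim_minus _ _ x _ _ (F1_derivable x) (F2_derivable x))
      (derivable_pt_lim_minus _ _ x _ _
         (derivable_pt_lim_plus _ _ x _ _ (F1_derivable x) (F2_derivable x))
         (derivable_pt_lim_const 1 x))). }
  assert (HdP : forall x, continuity_pt dP x) by (intro x; unfold dP; solve_continuity).
  pose proof (is_RInt_scal_derive P phi dP dphi 0 1
    (fun t _ => proj2 (is_derive_Reals _ _ _) (HP t))
    (fun t _ => proj2 (is_derive_Reals _ _ _) (Hphi t))
    (fun t _ => proj1 (continuity_pt_filterlim _ _) (HdP t))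
    (fun t _ => proj1 (continuity_pt_filterlim _ _) (Hdphi t))) as Hparts.
  pose proof (weak_solution_is_RInt _ _ _ _ _ _ _ _ _ _ _
                weak1 F1_extends Hphi Hdphi Hphi0 Hphi1) as I1.
  pose proof (weak_solution_is_RInt _ _ _ _ _ _ _ _ _ _ _
                weak2 F2_extends Hphi Hdphi Hphi0 Hphi1) as I2.
  pose proof (is_RInt_plus _ _ _ _ _ _ (is_RInt_minus _ _ _ _ _ _ I1 I2) Hparts) as Hsum.
  refine (eq_ind _ (is_RInt _ 0 1) (is_RInt_ext _ _ _ _ _ _ Hsum) _ _).
  - intros x _; unfold weak_integrand, P, dP, minus, plus, opp, scal; simpl.
    unfold mult; simpl; ring.
  - rewrite Hphi0, Hphi1; unfold minus, plus, opp, scal; simpl; unfold mult; simpl; ring.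
Qed.

Lemma weak_solutions_ordered x : 0 <= x <= 1 -> rho1 x <= rho2 x.
Proof.
  intros Hx; destruct (F1_extends x Hx) as [<- _], (F2_extends x Hx) as [<- _].
  apply Rminus_le.
  destruct weak1 as [rho1_0 [rho1_1 _]], weak2 as [rho2_0 [rho2_1 _]].
  apply (weak_identity_nonpositive eps (OmA + OmD) (fun y => F1 y - F2 y)
           (fun y => dF1 y - dF2 y) (fun y => F1 y + F2 y - 1)); try assumption.
  - intro y; apply derivable_pt_lim_minus; auto.
  - intro y; solve_continuity.
  - intro y; solve_continuity.
  - destruct (F1_extends 0), (F2_extends 0); lra.
  - destruct (F1_extends 1), (F2_extends 1); lra.
  - exact weak_solutions_difference_identity.
Qed.

End TwoWeakSolutions.

Theorem mainTheorem7 (eps OmA OmD alpha beta : R)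
  (Heps : 0 < eps) (HA : 0 < OmA) (HD : 0 < OmD)
  (rho1 drho1 rho2 drho2 : R -> R) :
  C1_01 rho1 drho1 -> C1_01 rho2 drho2 ->
  weak_solution_S eps OmA OmD alpha beta rho1 drho1 ->
  weak_solution_S eps OmA OmD alpha beta rho2 drho2 ->
  forall x, 0 <= x <= 1 -> rho1 x = rho2 x.
Proof.
  intros C1 C2 W1 W2 x Hx.
  destruct (C1_01_extend _ _ C1) as [F1 [dF1 [HF1 [HdF1 HF1_ext]]]].
  destruct (C1_01_extend _ _ C2) as [F2 [dF2 [HF2 [HdF2 HF2_ext]]]].
  apply Rle_antisym.
  - apply (weak_solutions_ordered eps OmA OmD alpha beta rho1 drho1 rho2 drho2 F1 dF1 F2 dF2);
      assumption || lra.
  - apply (weak_solutions_ordered eps OmA OmD alpha beta rho2 drho2 rho1 drho1 F2 dF2 F1 dF1);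
      assumption || lra.
Qed.
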